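(* Let $E$ be a row-finite graph and let $H_1\subseteq H_2$ be hereditary saturated subsets of $E^0$. Then there is a $\mathbb Z$-monoid isomorphism $M^{\mathrm{gr}}_{H_2/H_1}\cong M^{\mathrm{gr}}_{E_{H_2}}/M^{\mathrm{gr}}_{E_{H_1}}$ (sending $v(i)$, $v\in H_2\setminus H_1$, to the class of $v(i)$). In particular, for a hereditary saturated subset $H$ of $E^0$ and the $\mathbb Z$-order ideal $I$ of $M^{\mathrm{gr}}_E$ generated by $\{v(i):v\in H,i\in\mathbb Z\}$, there is a $\mathbb Z$-monoid isomorphism $M^{\mathrm{gr}}_{E/H}\cong M^{\mathrm{gr}}_E/I$.
   Context: A graph $E=(E^0,E^1,r,s)$ is row-finite if each vertex emits finitely many edges; a sink is a vertex emitting no edges. $H\subseteq E^0$ is hereditary if $s(e)\in H$ implies $r(e)\in H$; it is saturated if every non-sink $v$ with $r(s^{-1}(v))\subseteq H$ lies in $H$. For a row-finite graph $G$, $M^{\mathrm{gr}}_G$ is the commutative monoid generated by symbols $v(i)$ ($v\in G^0$, $i\in\mathbb Z$) subject to $v(i)=\sum_{e\in s^{-1}(v)}r(e)(i-1)$ for every non-sink $v$ and every $i$; $\mathbb Z$ acts by ${}^n v(i)=v(i-n)$. The restriction graph $E_H$ has vertices $H$, edges $\{e:s(e)\in H\}$. For $H_1\subseteq H_2$ hereditary saturated, the graph $H_2/H_1$ has vertices $H_2\setminus H_1$ and edges $\{e\in E^1: s(e)\in H_2,\ r(e)\notin H_1\}$ with restricted $r,s$; $E/H:=E^0/H$ (vertices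 $E^0\setminus H$, edges with $r(e)\notin H$). The natural map $M^{\mathrm{gr}}_{E_{H_1}}\to M^{\mathrm{gr}}_{E_{H_2}}$ ($v(i)\mapsto v(i)$) is used to regard $M^{\mathrm{gr}}_{E_{H_1}}$ as a submonoid of $M^{\mathrm{gr}}_{E_{H_2}}$. For a submonoid $N$ of a commutative monoid $M$, $M/N$ is $M$ modulo the congruence $a\sim b$ iff $a+i=b+j$ for some $i,j\in N$. *)

(* Graphs with arbitrary (possibly infinite) vertex/edge types;
   commutative monoids given by presentations, represented as setoids on
   lists (free monoid) modulo a congruence that includes permutation. *)
From Stdlib Require Import ZArith List Permutation.
Import ListNotations.
Open Scope Z_scope.

Record Graph := mkGraph {
  V : Type;  Ed : Type;
  src : Ed -> V;  rng : Ed -> V }.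
Arguments src {g}. Arguments rng {g}.

Definition row_finite (G : Graph) : Prop :=
  forall v : V G, exists l : list (Ed G), NoDup l /\ forall e, In e l <-> src e = v.

Definition sink (G : Graph) (v : V G) : Prop := forall e : Ed G, src e <> v.

Definition hereditary (G : Graph) (H : V G -> Prop) : Prop :=
  forall e : Ed G, H (src e) -> H (rng e).

Definition saturated (G : Graph) (H : V G -> Prop) : Prop :=
  forall v, ~ sink G v -> (forall e : Ed G, src e = v -> H (rng e)) -> H v.

Inductive cong {X : Type} (R : list X -> list X -> Prop) : list X -> list X -> Prop :=
| cong_base a b : R a b -> cong R a b
| cong_refl a : cong R a a
| cong_sym a b : cong R a b -> cong R b a
| cong_trans a b c : cong R a b -> cong R b c -> cong R a c
| cong_perm a b : Permutation a b -> cong R a b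
| cong_app a b c d : cong R a b -> cong R c d -> cong R (a ++ c) (b ++ d).

(* generator v(i) is the pair (v, i); an element is a finite sum of generators *)
Definition gen (G : Graph) : Type := (V G * Z)%type.

Definition zshift (G : Graph) (n : Z) (x : gen G) : gen G := (fst x, snd x - n).

Inductive graph_rel (G : Graph) : list (gen G) -> list (gen G) -> Prop :=
| graph_rel_intro (v : V G) (i : Z) (l : list (Ed G)) :
    NoDup l -> (forall e, In e l <-> src e = v) -> l <> [] ->
    graph_rel G [(v, i)] (map (fun e => (rng e, i - 1)) l).

Definition Mgr_eq (G : Graph) : list (gen G) -> list (gen G) -> Prop := cong (graph_rel G).

Definition quot_eq {X : Type} (eqM : list X -> list X -> Prop) (N : list X -> Prop)
  (a b : list X) : Prop :=
  exists i j, N i /\ N j /\ eqM (a ++ i) (b ++ j).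

Definition image_sub {X Y : Type} (eqM : list X -> list X -> Prop) (g : Y -> X)
  (x : list X) : Prop := exists z : list Y, eqM x (map g z).

Definition zmon_iso {A B : Type} (eqA : list A -> list A -> Prop) (eqB : list B -> list B -> Prop)
  (shA : Z -> A -> A) (shB : Z -> B -> B) (f : list A -> list B) : Prop :=
  (forall a b, eqA a b -> eqB (f a) (f b)) /\
  (forall a b, eqB (f a) (f b) -> eqA a b) /\
  (forall y, exists x, eqB (f x) y) /\
  eqB (f []) [] /\
  (forall a b, eqB (f (a ++ b)) (f a ++ f b)) /\
  (forall n a, eqB (f (map (shA n) a)) (map (shB n) (f a))).

Definition Z_order_ideal {X : Type} (eqM : list X -> list X -> Prop) (sh : Z -> X -> X)
  (I : list X -> Prop) : Prop :=
  (forall a b, eqM a b -> I a -> I b) /\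
  I [] /\
  (forall a b, I a -> I b -> I (a ++ b)) /\
  (forall a b, I (a ++ b) -> I a /\ I b) /\
  (forall n a, I a -> I (map (sh n) a)).

Definition gen_Z_order_ideal {X : Type} (eqM : list X -> list X -> Prop) (sh : Z -> X -> X)
  (S : list X -> Prop) (a : list X) : Prop :=
  forall I, Z_order_ideal eqM sh I -> (forall s, S s -> I s) -> I a.

Section Constructions.
Variable E : Graph.

Lemma restr_rng_ok (H : V E -> Prop) (hH : hereditary E H) (e : {e : Ed E | H (src e)}) :
  H (rng (proj1_sig e)).
Proof. exact (hH _ (proj2_sig e)). Qed.

Definition restr_graph (H : V E -> Prop) (hH : hereditary E H) : Graph :=
  {| V := {v : V E | H v};
     Ed := {e : Ed E | H (src e)};
     src := fun e => exist H (src (proj1_sig e)) (proj2_sig e);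
     rng := fun e => exist H (rng (proj1_sig e)) (restr_rng_ok H hH e) |}.

Lemma quot_src_ok (H1 H2 : V E -> Prop) (h1 : hereditary E H1)
  (e : {e : Ed E | H2 (src e) /\ ~ H1 (rng e)}) :
  H2 (src (proj1_sig e)) /\ ~ H1 (src (proj1_sig e)).
Proof.
  destruct e as [e [He1 He2]]; simpl; split; [exact He1|].
  intro Hs; apply He2, h1, Hs.
Qed.

Lemma quot_rng_ok (H1 H2 : V E -> Prop) (h2 : hereditary E H2)
  (e : {e : Ed E | H2 (src e) /\ ~ H1 (rng e)}) :
  H2 (rng (proj1_sig e)) /\ ~ H1 (rng (proj1_sig e)).
Proof. destruct e as [e [He1 He2]]; simpl; split; [exact (h2 _ He1)| exact He2]. Qed.

Definition quot_graph (H1 H2 : V E -> Prop) (h1 : hereditary E H1) (h2 : hereditary E H2) : Graph :=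
  {| V := {v : V E | H2 v /\ ~ H1 v};
     Ed := {e : Ed E | H2 (src e) /\ ~ H1 (rng e)};
     src := fun e => exist _ (src (proj1_sig e)) (quot_src_ok H1 H2 h1 e);
     rng := fun e => exist _ (rng (proj1_sig e)) (quot_rng_ok H1 H2 h2 e) |}.

Lemma hereditary_all : hereditary E (fun _ => True).
Proof. intros e _; exact I. Qed.

Definition quot_by (H : V E -> Prop) (hH : hereditary E H) : Graph :=
  quot_graph H (fun _ => True) hH hereditary_all.

Definition restr_incl (H1 H2 : V E -> Prop) (h1 : hereditary E H1) (h2 : hereditary E H2)
  (sub : forall v, H1 v -> H2 v) (x : gen (restr_graph H1 h1)) : gen (restr_graph H2 h2) :=
  (exist H2 (proj1_sig (fst x)) (sub _ (proj2_sig (fst x))), snd x).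

Definition quot_to_restr (H1 H2 : V E -> Prop) (h1 : hereditary E H1) (h2 : hereditary E H2)
  (x : gen (quot_graph H1 H2 h1 h2)) : gen (restr_graph H2 h2) :=
  (exist H2 (proj1_sig (fst x)) (proj1 (proj2_sig (fst x))), snd x).

Definition quot_by_to_E (H : V E -> Prop) (hH : hereditary E H)
  (x : gen (quot_by H hH)) : gen E := (proj1_sig (fst x), snd x).

Definition Mgr_quot_eq (H1 H2 : V E -> Prop) (h1 : hereditary E H1) (h2 : hereditary E H2)
  (sub : forall v, H1 v -> H2 v) : list (gen (restr_graph H2 h2)) -> list (gen (restr_graph H2 h2)) -> Prop :=
  quot_eq (Mgr_eq (restr_graph H2 h2))
          (image_sub (Mgr_eq (restr_graph H2 h2)) (restr_incl H1 H2 h1 h2 sub)).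

Definition ideal_of (H : V E -> Prop) : list (gen E) -> Prop :=
  gen_Z_order_ideal (Mgr_eq E) (zshift E)
    (fun s => exists v i, H v /\ s = [(v, i)]).

End Constructions.

From Stdlib Require Import ZArith List Permutation Classical ClassicalEpsilon ProofIrrelevance.
Import ListNotations.

(* Let K be hereditary and saturated in B, and let Q be the subgraph of B on the vertices outside K
   and the edges whose range is outside K (Q = H2/H1 inside E_{H2}, or E/H inside E).  Erasing the
   generators on K maps M^gr_B onto M^gr_Q: a relation at a vertex of K erases completely since K is
   hereditary, and a relation at a vertex outside K erases to the relation of Q at that vertex, which
   exists since K is saturated.  The kernel of erasure is a Z-order ideal containing K, so erasure
   kills every submonoid N between the elements supported in K and the Z-order ideal generated by K.
   Conversely the inclusion of generators sends a relation of Q at v(i) to the relation of B at v(i)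
   minus a summand supported in K, which N absorbs; the two maps are then mutually inverse
   isomorphisms M^gr_Q = M^gr_B / N.  Both claims are the instances N = M^gr_{E_{H1}} and N = I. *)

Record monoid_congruence {X : Type} (S : list X -> list X -> Prop) : Prop := {
  mc_sym : forall a b, S a b -> S b a;
  mc_trans : forall a b c, S a b -> S b c -> S a c;
  mc_perm : forall a b, Permutation a b -> S a b;
  mc_app : forall a b c d, S a b -> S c d -> S (a ++ c) (b ++ d) }.

Lemma cong_congruence {X : Type} (R : list X -> list X -> Prop) : monoid_congruence (cong R).
Proof. split; [exact (cong_sym R) | exact (cong_trans R) | exact (cong_perm R) | exact (cong_app R)]. Qed.

Lemma cong_least {X : Type} (R S : list X -> list X -> Prop) :
  monoid_congruence S -> (forall a b, R a b -> S a b) -> forall a b, cong R a b -> S a b.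
Proof.
  intros [Ssym Strans Sperm Sapp] HRS a b H.
  induction H; eauto using Permutation_refl.
Qed.

Lemma monoid_congruence_comap {X Y : Type} (S : list Y -> list Y -> Prop) (f : list X -> list Y) :
  monoid_congruence S -> (forall a b, f (a ++ b) = f a ++ f b) ->
  (forall a b, Permutation a b -> Permutation (f a) (f b)) ->
  monoid_congruence (fun a b => S (f a) (f b)).
Proof.
  intros [Ssym Strans Sperm Sapp] f_app f_perm; split.
  - intros a b; apply Ssym.
  - intros a b c; apply Strans.
  - intros a b Hab; apply Sperm, f_perm, Hab.
  - intros a b c d; rewrite !f_app; apply Sapp.
Qed.

Lemma quot_eq_of {X : Type} (S : list X -> list X -> Prop) (N : list X -> Prop) a b :
  N [] -> S a b -> quot_eq S N a b.
Proof. intros N_nil Hab; exists [], []; rewrite !app_nil_r; auto. Qed.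

Lemma quot_eq_congruence {X : Type} (S : list X -> list X -> Prop) (N : list X -> Prop) :
  monoid_congruence S -> N [] -> (forall a b, N a -> N b -> N (a ++ b)) ->
  monoid_congruence (quot_eq S N).
Proof.
  intros [Ssym Strans Sperm Sapp] N_nil N_app.
  assert (Srefl : forall a, S a a) by (intros a; apply Sperm, Permutation_refl).
  assert (swap : forall a b c d : list X,
            Permutation ((a ++ b) ++ (c ++ d)) ((a ++ c) ++ (b ++ d))).
  { intros a b c d; rewrite <- !app_assoc; apply Permutation_app_head, Permutation_app_swap_app. }
  split.
  - intros a b [i [j [Hi [Hj H]]]]; exists j, i; auto.
  - intros a b c [i [j [Hi [Hj Hab]]]] [k [l [Hk [Hl Hbc]]]].
    exists (i ++ k), (l ++ j); split; [auto | split; [auto |]].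
    rewrite !app_assoc.
    apply Strans with ((b ++ j) ++ k); [apply Sapp; auto |].
    apply Strans with ((b ++ k) ++ j); [| apply Sapp; auto].
    apply Sperm; rewrite <- !app_assoc; apply Permutation_app_head, Permutation_app_comm.
  - intros a b Hab; apply quot_eq_of; auto.
  - intros a b c d [i [j [Hi [Hj Hab]]]] [k [l [Hk [Hl Hcd]]]].
    exists (i ++ k), (j ++ l); split; [auto | split; [auto |]].
    apply Strans with ((a ++ i) ++ (c ++ k)); [apply Sperm, swap |].
    apply Strans with ((b ++ j) ++ (d ++ l)); [apply Sapp; auto |].
    apply Sperm, swap.
Qed.

Lemma cong_nil_iff {X : Type} (R : list X -> list X -> Prop) :
  (forall a b, R a b -> a <> [] /\ b <> []) ->
  forall a b, cong R a b -> (a = [] <-> b = []).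
Proof.
  intros HR; apply cong_least.
  - split.
    + intros a b; apply iff_sym.
    + intros a b c; apply iff_trans.
    + intros a b Hab; split; intros ->;
        [apply Permutation_nil | apply Permutation_nil, Permutation_sym]; exact Hab.
    + intros a b c d Hab Hcd; split; intros E; apply app_eq_nil in E as [-> ->];
        [rewrite (proj1 Hab), (proj1 Hcd) | rewrite (proj2 Hab), (proj2 Hcd)]; reflexivity.
  - intros a b Hab; destruct (HR a b Hab); tauto.
Qed.

Lemma sig_ext {A : Type} {P : A -> Prop} (a b : sig P) : proj1_sig a = proj1_sig b -> a = b.
Proof. destruct a, b; simpl; apply subset_eq_compat. Qed.

Definition pinv {A C : Type} (f : A -> C) (c : C) : option A :=
  match excluded_middle_informative (exists a, f a = c) with
  | left h => Some (proj1_sig (constructive_indefinite_description _ h))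
  | right _ => None
  end.

Lemma pinv_some {A C : Type} (f : A -> C) c a : pinv f c = Some a -> f a = c.
Proof.
  unfold pinv; destruct excluded_middle_informative as [h |]; [| discriminate].
  destruct (constructive_indefinite_description _ h) as [a' Ha']; simpl.
  intros E; injection E as <-; exact Ha'.
Qed.

Lemma pinv_none {A C : Type} (f : A -> C) c : pinv f c = None -> forall a, f a <> c.
Proof.
  unfold pinv; destruct excluded_middle_informative as [| h]; [discriminate |].
  intros _ a Ha; apply h; exists a; exact Ha.
Qed.

Lemma pinv_f {A C : Type} (f : A -> C) :
  (forall a a', f a = f a' -> a = a') -> forall a, pinv f (f a) = Some a.
Proof.
  intros f_inj a; destruct (pinv f (f a)) as [a' |] eqn:E.
  - f_equal; apply f_inj, (pinv_some f _ _ E).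
  - exfalso; exact (pinv_none f _ E a eq_refl).
Qed.

Definition pmap {A C : Type} (o : A -> option C) (l : list A) : list C :=
  flat_map (fun a => match o a with Some c => [c] | None => [] end) l.

Lemma pmap_app {A C : Type} (o : A -> option C) l l' : pmap o (l ++ l') = pmap o l ++ pmap o l'.
Proof. apply flat_map_app. Qed.

Lemma Permutation_pmap {A C : Type} (o : A -> option C) l l' :
  Permutation l l' -> Permutation (pmap o l) (pmap o l').
Proof. apply Permutation_flat_map. Qed.

Lemma in_pmap {A C : Type} (o : A -> option C) l c :
  In c (pmap o l) <-> exists a, In a l /\ o a = Some c.
Proof.
  unfold pmap; rewrite in_flat_map; split; intros [a [Ha Hc]]; exists a; split; auto.
  - destruct (o a); [destruct Hc as [-> | []]; reflexivity | destruct Hc].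
  - rewrite Hc; left; reflexivity.
Qed.

Lemma NoDup_pmap {A C : Type} (o : A -> option C) (g : C -> A) l :
  (forall a c, o a = Some c -> g c = a) -> NoDup l -> NoDup (pmap o l).
Proof.
  intros og; induction 1 as [| a l Ha Hl IH]; simpl; [constructor |].
  destruct (o a) as [c |] eqn:E; [| exact IH].
  constructor; [| exact IH].
  intros Hc; apply in_pmap in Hc as [a' [Ha' E']].
  apply Ha; rewrite <- (og _ _ E), (og _ _ E'); exact Ha'.
Qed.

Lemma graph_rel_nonempty (G : Graph) a b : graph_rel G a b -> a <> [] /\ b <> [].
Proof. intros [v i l _ _ Hl]; split; [discriminate | destruct l; [contradiction | discriminate]]. Qed.

Definition supported {G : Graph} (K : V G -> Prop) (l : list (gen G)) : Prop :=
  forall x, In x l -> K (fst x).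

Lemma ideal_of_app (G : Graph) (K : V G -> Prop) a b :
  ideal_of G K a -> ideal_of G K b -> ideal_of G K (a ++ b).
Proof. intros Ha Hb I HI HK; apply HI; [apply Ha | apply Hb]; auto. Qed.

Lemma ideal_of_supported (G : Graph) (K : V G -> Prop) l : supported K l -> ideal_of G K l.
Proof.
  intros Hl I HI HK; induction l as [| [v i] l IH]; [apply HI |].
  apply (proj1 (proj2 (proj2 HI)) [(v, i)] l).
  - apply HK; exists v, i; split; [exact (Hl (v, i) (or_introl eq_refl)) | reflexivity].
  - apply IH; intros x Hx; apply Hl; right; exact Hx.
Qed.

Lemma ideal_of_cong (G : Graph) (K : V G -> Prop) a b :
  Mgr_eq G a b -> ideal_of G K a -> ideal_of G K b.
Proof. intros Hab Ha I HI HK; exact (proj1 HI a b Hab (Ha I HI HK)). Qed.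

Section ComplementSubgraph.
Variables (B Q : Graph) (K : V B -> Prop).
Hypotheses (hK : hereditary B K) (sK : saturated B K) (rfB : row_finite B).
Variables (vi : V Q -> V B) (ei : Ed Q -> Ed B).
Hypotheses (src_ei : forall d, src (ei d) = vi (src d)) (rng_ei : forall d, rng (ei d) = vi (rng d)).
Hypotheses (vi_inj : forall q q', vi q = vi q' -> q = q') (ei_inj : forall d d', ei d = ei d' -> d = d').
Hypothesis vi_notK : forall q, ~ K (vi q).
Hypothesis vi_onto : forall v, ~ K v -> exists q, vi q = v.
Hypothesis ei_onto : forall e, ~ K (rng e) -> exists d, ei d = e.

Definition embed (y : gen Q) : gen B := (vi (fst y), snd y).

Definition erase : list (gen B) -> list (gen Q) :=
  pmap (fun x => option_map (fun q => (q, snd x)) (pinv vi (fst x))).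

Definition erase_edges : list (Ed B) -> list (Ed Q) := pmap (pinv ei).

Lemma pinv_vi_none v : pinv vi v = None -> K v.
Proof.
  intros Hv; apply NNPP; intros Hk; destruct (vi_onto v Hk) as [q <-].
  exact (pinv_none vi _ Hv q eq_refl).
Qed.

Lemma erase_embed a : erase (map embed a) = a.
Proof.
  induction a as [| [q i] a IH]; [reflexivity |].
  unfold erase, pmap in *; simpl; rewrite (pinv_f vi vi_inj q); simpl; f_equal; exact IH.
Qed.

Lemma erase_supported l : supported K l -> erase l = [].
Proof.
  induction l as [| [v i] l IH]; intros Hl; [reflexivity |].
  unfold erase, pmap in *; simpl.
  destruct (pinv vi v) as [q |] eqn:E.
  - exfalso; apply (vi_notK q); rewrite (pinv_some vi _ _ E); exact (Hl (v, i) (or_introl eq_refl)).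
  - apply IH; intros x Hx; apply Hl; right; exact Hx.
Qed.

Lemma erase_shift n a : erase (map (zshift B n) a) = map (zshift Q n) (erase a).
Proof.
  induction a as [| [v i] a IH]; [reflexivity |].
  unfold erase, pmap in *; simpl; destruct (pinv vi v); simpl; rewrite IH; reflexivity.
Qed.

Lemma erase_split y : exists k, supported K k /\ Permutation y (map embed (erase y) ++ k).
Proof.
  induction y as [| [v i] y [k [Hk Hy]]]; [exists []; split; [intros _ [] | constructor] |].
  unfold erase, pmap in *; simpl.
  destruct (pinv vi v) as [q |] eqn:E; simpl.
  - exists k; split; [exact Hk |].
    unfold embed at 1; simpl; rewrite (pinv_some vi _ _ E); apply perm_skip, Hy.
  - exists ((v, i) :: k); split.
    + intros x [<- | Hx]; [apply pinv_vi_none, E | apply Hk, Hx].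
    + eapply Permutation_trans; [apply perm_skip, Hy | apply Permutation_middle].
Qed.

Lemma erase_rng_edges l i :
  erase (map (fun e => (rng e, i)) l) = map (fun d => (rng d, i)) (erase_edges l).
Proof.
  induction l as [| e l IH]; [reflexivity |].
  unfold erase, erase_edges, pmap in *; simpl.
  destruct (pinv ei e) as [d |] eqn:E; simpl.
  - rewrite <- (pinv_some ei _ _ E), rng_ei, (pinv_f vi vi_inj); simpl; f_equal; exact IH.
  - destruct (pinv vi (rng e)) as [q |] eqn:Eq; [| exact IH].
    exfalso; destruct (ei_onto e) as [d Hd].
    + rewrite <- (pinv_some vi _ _ Eq); apply vi_notK.
    + exact (pinv_none ei _ E d Hd).
Qed.

Lemma in_erase_edges d l : In d (erase_edges l) <-> In (ei d) l.
Proof.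
  unfold erase_edges; rewrite in_pmap; split.
  - intros [e [He E]]; rewrite (pinv_some ei _ _ E); exact He.
  - intros Hd; exists (ei d); split; [exact Hd | apply (pinv_f ei ei_inj)].
Qed.

Lemma erase_edges_out q l :
  NoDup l -> (forall e, In e l <-> src e = vi q) ->
  NoDup (erase_edges l) /\ forall d, In d (erase_edges l) <-> src d = q.
Proof.
  intros Hnd Hl; split.
  - apply (NoDup_pmap _ ei); [apply pinv_some | exact Hnd].
  - intros d; rewrite in_erase_edges, Hl, src_ei; split; [apply vi_inj | intros ->; reflexivity].
Qed.

(* Saturation of K: a vertex outside K emitting edges emits one whose range is outside K. *)
Lemma erase_edges_nonempty q l :
  (forall e, In e l <-> src e = vi q) -> l <> [] -> erase_edges l <> [].
Proof.
  intros Hl Hne Hnil; apply (vi_notK q), sK.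
  - intros Hsink; destruct l as [| e l]; [contradiction |].
    exact (Hsink e (proj1 (Hl e) (or_introl eq_refl))).
  - intros e He; apply NNPP; intros HKe; destruct (ei_onto e HKe) as [d <-].
    assert (Hd : In d (erase_edges l)) by (apply in_erase_edges, Hl, He).
    rewrite Hnil in Hd; exact Hd.
Qed.

Lemma erase_rel a b : graph_rel B a b -> Mgr_eq Q (erase a) (erase b).
Proof.
  intros [v i l Hnd Hl Hne].
  destruct (pinv vi v) as [q |] eqn:E.
  - pose proof (pinv_some vi _ _ E) as <-.
    assert (Hq : erase [(vi q, i)] = [(q, i)]) by (unfold erase, pmap; simpl; rewrite E; reflexivity).
    rewrite Hq, erase_rng_edges.
    destruct (erase_edges_out q l Hnd Hl) as [Hnd' Hl'].
    apply cong_base; constructor; [exact Hnd' | exact Hl' | exact (erase_edges_nonempty q l Hl Hne)].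
  - assert (Hv : K v) by exact (pinv_vi_none v E).
    rewrite !erase_supported; [apply cong_refl | |].
    + intros x Hx; apply in_map_iff in Hx as [e [<- He]]; apply hK; rewrite (proj1 (Hl e) He); exact Hv.
    + intros x [<- | []]; exact Hv.
Qed.

Lemma erase_cong a b : Mgr_eq B a b -> Mgr_eq Q (erase a) (erase b).
Proof.
  apply (cong_least _ (fun a b => Mgr_eq Q (erase a) (erase b))); [| exact erase_rel].
  apply monoid_congruence_comap; [apply cong_congruence | apply pmap_app | apply Permutation_pmap].
Qed.

Lemma erase_kernel_ideal : Z_order_ideal (Mgr_eq B) (zshift B) (fun a => Mgr_eq Q (erase a) []).
Proof.
  assert (erase_nil : forall a, Mgr_eq Q (erase a) [] -> erase a = []).
  { intros a Ha; exact (proj2 (cong_nil_iff _ (graph_rel_nonempty Q) _ _ Ha) eq_refl). }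
  split; [| split; [| split; [| split]]].
  - intros a b Hab Ha; exact (cong_trans _ _ _ _ (cong_sym _ _ _ (erase_cong a b Hab)) Ha).
  - apply cong_refl.
  - intros a b Ha Hb; unfold erase; rewrite pmap_app; exact (cong_app _ _ [] _ [] Ha Hb).
  - intros a b Hab; apply erase_nil in Hab; unfold erase in Hab; rewrite pmap_app in Hab.
    apply app_eq_nil in Hab as [Ha Hb]; unfold erase; rewrite Ha, Hb; split; apply cong_refl.
  - intros n a Ha; rewrite erase_shift, (erase_nil a Ha); apply cong_refl.
Qed.

Lemma erase_ideal_of n : ideal_of B K n -> Mgr_eq Q (erase n) [].
Proof.
  intros Hn; apply (Hn _ erase_kernel_ideal).
  intros s [v [i [Hv ->]]]; rewrite erase_supported; [apply cong_refl |].
  intros x [<- | []]; exact Hv.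
Qed.

Variable N : list (gen B) -> Prop.
Hypothesis N_app : forall a b, N a -> N b -> N (a ++ b).
Hypothesis N_supported : forall l, supported K l -> N l.
Hypothesis N_ideal : forall n, N n -> ideal_of B K n.

Lemma N_nil : N [].
Proof. apply N_supported; intros _ []. Qed.

Lemma embed_rel a b : graph_rel Q a b -> quot_eq (Mgr_eq B) N (map embed a) (map embed b).
Proof.
  intros [q i lQ Hnd Hin Hne].
  destruct (rfB (vi q)) as [l [Hl Hli]].
  destruct (erase_edges_out q l Hl Hli) as [Hnd' Hin'].
  assert (Hperm : Permutation lQ (erase_edges l))
    by (apply NoDup_Permutation; [exact Hnd | exact Hnd' | intros d; rewrite Hin, Hin'; reflexivity]).
  destruct (erase_split (map (fun e => (rng e, i - 1)) l)) as [k [Hk Hsplit]].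
  rewrite erase_rng_edges in Hsplit.
  exists [], k; split; [exact N_nil | split; [exact (N_supported k Hk) |]].
  apply cong_trans with (map (fun e => (rng e, i - 1)) l).
  - apply cong_base; constructor; [exact Hl | exact Hli |].
    destruct lQ as [| d lQ]; [contradiction |].
    intros ->; exact (proj1 (in_erase_edges d []) (proj2 (Hin' d) (proj1 (Hin d) (or_introl eq_refl)))).
  - apply cong_perm; eapply Permutation_trans; [exact Hsplit |].
    apply Permutation_app_tail, Permutation_map, Permutation_map, Permutation_sym, Hperm.
Qed.

Theorem embed_zmon_iso :
  zmon_iso (Mgr_eq Q) (quot_eq (Mgr_eq B) N) (zshift Q) (zshift B) (map embed).
Proof.
  assert (qrefl : forall a b, a = b -> quot_eq (Mgr_eq B) N a b)
    by (intros a b ->; apply quot_eq_of; [exact N_nil | apply cong_refl]).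
  split; [| split; [| split; [| split; [| split]]]].
  - apply (cong_least _ (fun a b => quot_eq (Mgr_eq B) N (map embed a) (map embed b)));
      [| exact embed_rel].
    apply monoid_congruence_comap; [| apply map_app | apply Permutation_map].
    apply quot_eq_congruence; [apply cong_congruence | exact N_nil | exact N_app].
  - intros a b [i [j [Hi [Hj Hab]]]].
    apply erase_cong in Hab; unfold erase in Hab; rewrite !pmap_app in Hab; fold erase in Hab.
    rewrite !erase_embed in Hab.
    rewrite <- (app_nil_r a), <- (app_nil_r b).
    apply cong_trans with (a ++ erase i); [apply cong_app; [apply cong_refl |] |].
    { apply cong_sym, erase_ideal_of, N_ideal, Hi. }
    apply cong_trans with (b ++ erase j); [exact Hab |].
    apply cong_app; [apply cong_refl | apply erase_ideal_of, N_ideal, Hj].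
  - intros y; destruct (erase_split y) as [k [Hk Hy]].
    exists (erase y), k, []; split; [exact (N_supported k Hk) | split; [exact N_nil |]].
    rewrite app_nil_r; apply cong_perm, Permutation_sym, Hy.
  - apply qrefl; reflexivity.
  - intros a b; apply qrefl, map_app.
  - intros n a; apply qrefl; rewrite !map_map; apply map_ext; reflexivity.
Qed.

End ComplementSubgraph.

Lemma row_finite_restr_graph (E : Graph) (H : V E -> Prop) (hH : hereditary E H) :
  row_finite E -> row_finite (restr_graph E H hH).
Proof.
  intros hrf v; destruct (hrf (proj1_sig v)) as [l [Hnd Hl]].
  exists (pmap (pinv (@proj1_sig _ (fun e => H (src e)))) l); split.
  - apply (NoDup_pmap _ (@proj1_sig _ _)); [apply pinv_some | exact Hnd].
  - intros e; rewrite in_pmap; split.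
    + intros [e0 [He0 E0]]; apply sig_ext; simpl.
      rewrite (pinv_some _ _ _ E0); apply Hl, He0.
    + intros <-; exists (proj1_sig e); split; [apply Hl; reflexivity |].
      apply (pinv_f _ sig_ext).
Qed.

Lemma hereditary_restr (E : Graph) (H1 H2 : V E -> Prop) (h2 : hereditary E H2) :
  hereditary E H1 -> hereditary (restr_graph E H2 h2) (fun v => H1 (proj1_sig v)).
Proof. intros h1 e; exact (h1 (proj1_sig e)). Qed.

Lemma saturated_restr (E : Graph) (H1 H2 : V E -> Prop) (h2 : hereditary E H2) :
  saturated E H1 -> saturated (restr_graph E H2 h2) (fun v => H1 (proj1_sig v)).
Proof.
  intros s1 v Hns Hall; apply s1.
  - intros Hsink; apply Hns; intros e He; apply (Hsink (proj1_sig e)); rewrite <- He; reflexivity.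
  - intros e He.
    assert (He2 : H2 (src e)) by (rewrite He; exact (proj2_sig v)).
    apply (Hall (exist _ e He2)), sig_ext, He.
Qed.

Lemma supported_restr_incl (E : Graph) (H1 H2 : V E -> Prop) (h1 : hereditary E H1)
  (h2 : hereditary E H2) (sub : forall v, H1 v -> H2 v) l :
  supported (fun v : V (restr_graph E H2 h2) => H1 (proj1_sig v)) l ->
  exists z, l = map (restr_incl E H1 H2 h1 h2 sub) z.
Proof.
  induction l as [| [v i] l IH]; intros Hl; [exists []; reflexivity |].
  destruct IH as [z ->]; [intros x Hx; apply Hl; right; exact Hx |].
  exists ((exist H1 (proj1_sig v) (Hl (v, i) (or_introl eq_refl)), i) :: z); simpl.
  f_equal; unfold restr_incl; simpl; f_equal; apply sig_ext; reflexivity.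
Qed.

Lemma quot_graph_Mgr_iso (E : Graph) (H1 H2 : V E -> Prop) (h1 : hereditary E H1)
  (h2 : hereditary E H2) (sub : forall v, H1 v -> H2 v) :
  row_finite E -> saturated E H1 ->
  exists f : list (gen (quot_graph E H1 H2 h1 h2)) -> list (gen (restr_graph E H2 h2)),
    zmon_iso (Mgr_eq (quot_graph E H1 H2 h1 h2)) (Mgr_quot_eq E H1 H2 h1 h2 sub)
             (zshift _) (zshift _) f /\
    (forall x, Mgr_quot_eq E H1 H2 h1 h2 sub (f [x]) [quot_to_restr E H1 H2 h1 h2 x]).
Proof.
  intros hrf s1.
  set (B := restr_graph E H2 h2); set (Q := quot_graph E H1 H2 h1 h2).
  set (K := fun v : V B => H1 (proj1_sig v)).
  set (vi := fun q : V Q => exist H2 (proj1_sig q) (proj1 (proj2_sig q)) : V B).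
  set (ei := fun d : Ed Q => exist (fun e => H2 (src e)) (proj1_sig d) (proj1 (proj2_sig d)) : Ed B).
  set (N := image_sub (Mgr_eq B) (restr_incl E H1 H2 h1 h2 sub)).
  assert (N_supported : forall l, supported K l -> N l).
  { intros l Hl; destruct (supported_restr_incl E H1 H2 h1 h2 sub l Hl) as [z ->].
    exists z; apply cong_refl. }
  exists (map (embed B Q vi)); split.
  - apply (embed_zmon_iso B Q K) with (ei := ei).
    + apply hereditary_restr, h1.
    + apply saturated_restr, s1.
    + apply row_finite_restr_graph, hrf.
    + intros d; apply sig_ext; reflexivity.
    + intros d; apply sig_ext; reflexivity.
    + intros q q' Eq; apply sig_ext, (f_equal (@proj1_sig _ _) Eq).
    + intros d d' Ed; apply sig_ext, (f_equal (@proj1_sig _ _) Ed).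
    + intros q; exact (proj2 (proj2_sig q)).
    + intros v Hv; exists (exist _ (proj1_sig v) (conj (proj2_sig v) Hv)); apply sig_ext; reflexivity.
    + intros e He; exists (exist _ (proj1_sig e) (conj (proj2_sig e) He)); apply sig_ext; reflexivity.
    + intros a b [z Hz] [w Hw]; exists (z ++ w); rewrite map_app; apply cong_app; assumption.
    + exact N_supported.
    + intros n [z Hz]; apply (ideal_of_cong _ _ _ _ (cong_sym _ _ _ Hz)), ideal_of_supported.
      intros x Hx; apply in_map_iff in Hx as [y [<- _]]; exact (proj2_sig (fst y)).
  - intros x; apply quot_eq_of; [apply N_supported; intros _ [] | apply cong_refl].
Qed.

Lemma quot_by_Mgr_iso (E : Graph) (H : V E -> Prop) (hH : hereditary E H) :
  row_finite E -> saturated E H ->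
  exists f : list (gen (quot_by E H hH)) -> list (gen E),
    zmon_iso (Mgr_eq (quot_by E H hH)) (quot_eq (Mgr_eq E) (ideal_of E H))
             (zshift _) (zshift _) f /\
    (forall x, quot_eq (Mgr_eq E) (ideal_of E H) (f [x]) [quot_by_to_E E H hH x]).
Proof.
  intros hrf sH.
  set (vi := fun q : V (quot_by E H hH) => proj1_sig q).
  exists (map (embed E _ vi)); split.
  - apply (embed_zmon_iso E _ H) with (ei := fun d => proj1_sig d).
    + exact hH.
    + exact sH.
    + exact hrf.
    + intros d; reflexivity.
    + intros d; reflexivity.
    + intros q q'; apply sig_ext.
    + intros d d'; apply sig_ext.
    + intros q; exact (proj2 (proj2_sig q)).
    + intros v Hv; exists (exist _ v (conj I Hv)); reflexivity.
    + intros e He; exists (exist _ e (conj I He)); reflexivity.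
    + apply ideal_of_app.
    + apply ideal_of_supported.
    + intros n Hn; exact Hn.
  - intros x; apply quot_eq_of; [apply ideal_of_supported; intros _ [] | apply cong_refl].
Qed.

Theorem lemma3p3 (E : Graph) (hrf : row_finite E) :
  (forall (H1 H2 : V E -> Prop) (h1 : hereditary E H1) (h2 : hereditary E H2)
          (sub : forall v, H1 v -> H2 v),
     saturated E H1 -> saturated E H2 ->
     exists f : list (gen (quot_graph E H1 H2 h1 h2)) -> list (gen (restr_graph E H2 h2)),
       zmon_iso (Mgr_eq (quot_graph E H1 H2 h1 h2)) (Mgr_quot_eq E H1 H2 h1 h2 sub)
                (zshift _) (zshift _) f /\
       (forall x, Mgr_quot_eq E H1 H2 h1 h2 sub (f [x]) [quot_to_restr E H1 H2 h1 h2 x])) /\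
  (forall (H : V E -> Prop) (hH : hereditary E H),
     saturated E H ->
     exists f : list (gen (quot_by E H hH)) -> list (gen E),
       zmon_iso (Mgr_eq (quot_by E H hH)) (quot_eq (Mgr_eq E) (ideal_of E H))
                (zshift _) (zshift _) f /\
       (forall x, quot_eq (Mgr_eq E) (ideal_of E H) (f [x]) [quot_by_to_E E H hH x])).
Proof.
  split.
  - intros H1 H2 h1 h2 sub s1 _; exact (quot_graph_Mgr_iso E H1 H2 h1 h2 sub hrf s1).
  - intros H hH sH; exact (quot_by_Mgr_iso E H hH hrf sH).
Qed.
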